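(* Let $\Lambda_0$ be the even shift over $\{0,1\}$ (the subshift with forbidden words $1\,0^{2n+1}\,1$, $n\in\mathbb Z_{\ge0}$) and $\Lambda_1$ the odd shift over $\{0,1\}$ (forbidden words $1\,0^{2n}\,1$, $n\in\mathbb Z_{\ge0}$). Then the one-sided subshifts $(X_{\Lambda_0},\sigma_{\Lambda_0})$ and $(X_{\Lambda_1},\sigma_{\Lambda_1})$ are continuously orbit equivalent.
   Context: Both are normal subshifts. Subshifts over finite alphabet $\Sigma$: $B_l(\Lambda)$, $B_*(\Lambda)$ admissible words; $X_\Lambda=\{(x_n)_{n\in\mathbb N}:(x_n)_{n\in\mathbb Z}\in\Lambda\}$ with shift $\sigma_\Lambda$. $\Gamma_l^-(\mu)=\{\nu\in B_l(\Lambda):\nu\mu\in B_*(\Lambda)\}$, $\Gamma_*^+(\mu)=\{\nu:\mu\nu\in B_*(\Lambda)\}$; $\mu$ is $l$-synchronizing if $\Gamma_l^-(\mu)=\Gamma_l^-(\mu\omega)$ for all $\omega\in\Gamma_*^+(\mu)$, $S_l(\Lambda)$ the set of these; $\mu\sim_l\nu$ iff $\Gamma_l^-(\mu)=\Gamma_l^-(\nu)$. The minimal presentation $\mathfrak L=\mathfrak L_\Lambda^{\min}$ of a normal $\Lambda$ has vertex sets $V_0$ a singleton and $V_l=S_l(\Lambda)/\!\sim_l$, one edge labeled $\alpha$ from $[\alpha\nu]_l$ to $[\nu]_{l+1}$ for each $\nu\in S_{l+1}(\Lambda)$, $\alpha\nu\in B_*(\Lambda)$, and maps $\iota([\nu]_{l+1})=[\nu]_l$.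 Let $\Omega_{\mathfrak L}=\{(u^l)_{l\ge0}\in\prod_lV_l:\iota(u^{l+1})=u^l\}$; $E_{\mathfrak L}$ the set of $(u,\alpha,w)\in\Omega_{\mathfrak L}\times\Sigma\times\Omega_{\mathfrak L}$ such that for each $l$ there is an edge from $u^l$ to $w^{l+1}$ labeled $\alpha$; $X_{\mathfrak L}=\{(\alpha_i,u_i)_{i\in\mathbb N}:\exists u_0,\ (u_{i-1},\alpha_i,u_i)\in E_{\mathfrak L}\ \forall i\ge1\}$ with product topology, shift $\sigma_{\mathfrak L}$ and factor map $\pi_{\mathfrak L}((\alpha_i,u_i)_i)=(\alpha_i)_i$. For normal $\Lambda_0,\Lambda_1$ with $\mathfrak L_i=\mathfrak L_{\Lambda_i}^{\min}$, $X_{\Lambda_0}$ and $X_{\Lambda_1}$ are continuously orbit equivalent if there exist homeomorphisms $h_{\mathfrak L}:X_{\mathfrak L_0}\to X_{\mathfrak L_1}$, $h_\Lambda:X_{\Lambda_0}\to X_{\Lambda_1}$ and continuous $k_i,l_i:X_{\mathfrak L_i}\to\mathbb Z_{\ge0}$ with $\pi_{\mathfrak L_1}\circ h_{\mathfrak L}=h_\Lambda\circ\pi_{\mathfrak L_0}$, $\sigma_{\mathfrak L_1}^{k_0(x)}(h_{\mathfrak L}(\sigma_{\mathfrak L_0}(x)))=\sigma_{\mathfrak L_1}^{l_0(x)}(h_{\mathfrak L}(x))$ and $\sigma_{\mathfrak L_0}^{k_1(y)}(h_{\mathfrak L}^{-1}(\sigma_{\mathfrak L_1}(y)))=\sigma_{\mathfrak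 L_0}^{l_1(y)}(h_{\mathfrak L}^{-1}(y))$ for all $x\in X_{\mathfrak L_0}$, $y\in X_{\mathfrak L_1}$. *)

From Stdlib Require Import ZArith List.
Import ListNotations.
Set Implicit Arguments.

Section Subshifts.
Variable Sigma : Type.

(* A two-sided subshift is given as a predicate on bi-infinite sequences. *)
Definition word := list Sigma.
Definition biseq := Z -> Sigma.

Definition occurs (w : word) (x : biseq) : Prop :=
  exists k : Z, forall i : nat, (i < length w)%nat ->
    nth_error w i = Some (x (k + Z.of_nat i)%Z).

Definition Badm (Lam : biseq -> Prop) (w : word) : Prop :=
  exists x, Lam x /\ occurs w x.

Definition Bl (Lam : biseq -> Prop) (l : nat) (w : word) : Prop :=
  Badm Lam w /\ length w = l.

Definition Gamma_minus (Lam : biseq -> Prop) (l : nat) (mu nu : word) : Prop :=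
  Bl Lam l nu /\ Badm Lam (nu ++ mu).

Definition Gamma_plus (Lam : biseq -> Prop) (mu nu : word) : Prop :=
  Badm Lam (mu ++ nu).

Definition sync (Lam : biseq -> Prop) (l : nat) (mu : word) : Prop :=
  Badm Lam mu /\
  forall omega, Gamma_plus Lam mu omega ->
    forall nu, Gamma_minus Lam l mu nu <-> Gamma_minus Lam l (mu ++ omega) nu.

Definition sim (Lam : biseq -> Prop) (l : nat) (mu nu : word) : Prop :=
  forall w, Gamma_minus Lam l mu w <-> Gamma_minus Lam l nu w.

Definition cls (Lam : biseq -> Prop) (l : nat) (nu : word) : word -> Prop :=
  fun mu => sync Lam l mu /\ sim Lam l mu nu.

Definition vertex (Lam : biseq -> Prop) (l : nat) (v : word -> Prop) : Prop :=
  exists nu, sync Lam l nu /\ v = cls Lam l nu.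

Definition edge (Lam : biseq -> Prop) (l : nat) (v : word -> Prop) (a : Sigma)
  (w : word -> Prop) : Prop :=
  exists nu, sync Lam (S l) nu /\ Badm Lam (a :: nu) /\
    v = cls Lam l (a :: nu) /\ w = cls Lam (S l) nu.

(* Omega_L: sequences (u^l)_l with u^l in V_l and iota(u^{l+1}) = u^l,
   where iota([nu]_{l+1}) = [nu]_l. *)
Definition Omega (Lam : biseq -> Prop) (u : nat -> (word -> Prop)) : Prop :=
  (forall l, vertex Lam l (u l)) /\
  forall l, exists nu, sync Lam (S l) nu /\ u (S l) = cls Lam (S l) nu /\
                       u l = cls Lam l nu.

Definition EL (Lam : biseq -> Prop) (u : nat -> (word -> Prop)) (a : Sigma)
  (w : nat -> (word -> Prop)) : Prop :=
  Omega Lam u /\ Omega Lam w /\ forall l, edge Lam l (u l) a (w (S l)).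

(* Points of X_L: sequences indexed by nat; our index i corresponds to the
   paper's index i+1 (the paper's u_0 is existentially quantified). *)
Definition Lpoint := nat -> (Sigma * (nat -> (word -> Prop))).

Definition XL (Lam : biseq -> Prop) (x : Lpoint) : Prop :=
  exists u0, EL Lam u0 (fst (x O)) (snd (x O)) /\
  forall i, EL Lam (snd (x i)) (fst (x (S i))) (snd (x (S i))).

Definition XLam (Lam : biseq -> Prop) (x : nat -> Sigma) : Prop :=
  exists y, Lam y /\ forall n : nat, y (Z.of_nat n) = x n.

Definition piL (x : Lpoint) : nat -> Sigma := fun n => fst (x n).

Definition coordL (x : Lpoint) (c : nat * option nat) : Sigma + (word -> Prop) :=
  match snd c with
  | None => inl (fst (x (fst c)))
  | Some l => inr (snd (x (fst c)) l)
  end.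

Definition coordLam (x : nat -> Sigma) (n : nat) : Sigma := x n.

End Subshifts.

Definition shift {A : Type} (x : nat -> A) : nat -> A := fun n => x (S n).

Definition shiftk {A : Type} (k : nat) (x : nat -> A) : nat -> A :=
  Nat.iter k (@shift A) x.

Definition coordNat (k : nat) (_ : unit) : nat := k.

(* Continuity of f : S -> Q for the initial (product) topologies making
   all coordinate maps cP _ c, cQ _ c' continuous into discrete spaces;
   S carries the subspace topology. *)
Definition continuous_on {P Q CP CQ DP DQ : Type}
  (cP : P -> CP -> DP) (cQ : Q -> CQ -> DQ) (S : P -> Prop) (f : P -> Q) : Prop :=
  forall x, S x -> forall c : CQ, exists L : list CP,
    forall y, S y -> (forall d, In d L -> cP y d = cP x d) ->
      cQ (f y) c = cQ (f x) c.

Definition homeo {P Q CP CQ DP DQ : Type}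
  (cP : P -> CP -> DP) (cQ : Q -> CQ -> DQ) (S : P -> Prop) (T : Q -> Prop)
  (f : P -> Q) (g : Q -> P) : Prop :=
  (forall x, S x -> T (f x)) /\ (forall y, T y -> S (g y)) /\
  (forall x, S x -> g (f x) = x) /\ (forall y, T y -> f (g y) = y) /\
  continuous_on cP cQ S f /\ continuous_on cQ cP T g.

(* Continuous orbit equivalence of X_{Lambda0}, X_{Lambda1} (via the minimal
   presentations), as in the paper. *)
Definition coe {S0 S1 : Type} (Lam0 : biseq S0 -> Prop) (Lam1 : biseq S1 -> Prop)
  : Prop :=
  exists (hL : Lpoint S0 -> Lpoint S1) (hLinv : Lpoint S1 -> Lpoint S0)
         (hLam : (nat -> S0) -> (nat -> S1)) (hLaminv : (nat -> S1) -> (nat -> S0))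
         (k0 l0 : Lpoint S0 -> nat) (k1 l1 : Lpoint S1 -> nat),
    homeo (@coordL S0) (@coordL S1) (XL Lam0) (XL Lam1) hL hLinv /\
    homeo (@coordLam S0) (@coordLam S1) (XLam Lam0) (XLam Lam1) hLam hLaminv /\
    continuous_on (@coordL S0) coordNat (XL Lam0) k0 /\
    continuous_on (@coordL S0) coordNat (XL Lam0) l0 /\
    continuous_on (@coordL S1) coordNat (XL Lam1) k1 /\
    continuous_on (@coordL S1) coordNat (XL Lam1) l1 /\
    (forall x, XL Lam0 x -> piL (hL x) = hLam (piL x)) /\
    (forall x, XL Lam0 x ->
       shiftk (k0 x) (hL (shift x)) = shiftk (l0 x) (hL x)) /\
    (forall y, XL Lam1 y ->
       shiftk (k1 y) (hLinv (shift y)) = shiftk (l1 y) (hLinv y)).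

(* Alphabet {0,1} encoded as bool, with 1 = true, 0 = false. *)
Definition even_shift (x : biseq bool) : Prop :=
  forall n : nat, ~ occurs (true :: repeat false (2 * n + 1) ++ [true]) x.

Definition odd_shift (x : biseq bool) : Prop :=
  forall n : nat, ~ occurs (true :: repeat false (2 * n) ++ [true]) x.

(* Both shifts are defined by forbidding the gaps 1 0^m 1 of one parity.  In such a
   shift a word containing a 1 is synchronizing, and the words that may precede it
   only depend on the parity of its number of leading zeros, while a word of zeros
   is never synchronizing.  So every level l >= 1 of the minimal presentation has
   exactly two vertices, and a point of X_L is a symbol sequence together with a
   parity label subject to a local edge rule.  The substitution 1 -> 10 turns even
   gaps into odd gaps; on labelled sequences it is a bijection whose inverse deletes
   the 0 after each 1.  Both maps read only a finite prefix, and the substitution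
   commutes with the shift up to one extra shift after a 1, which gives the
   continuous orbit equivalence. *)

From Stdlib Require Import ZArith List Lia Bool Arith.
From Stdlib Require Import ClassicalEpsilon FunctionalExtensionality PropExtensionality.
Import ListNotations.

Lemma occurs_app_l (S : Type) (u v : list S) (x : biseq S) :
  occurs (u ++ v) x -> occurs u x.
Proof.
  intros [k H]. exists k. intros i Hi.
  rewrite <- (nth_error_app1 u v Hi). apply H. rewrite length_app. lia.
Qed.

Lemma occurs_app_r (S : Type) (u v : list S) (x : biseq S) :
  occurs (u ++ v) x -> occurs v x.
Proof.
  intros [k H]. exists (k + Z.of_nat (length u))%Z. intros i Hi.
  specialize (H (length u + i)%nat ltac:(rewrite length_app; lia)).
  rewrite nth_error_app2, Nat.add_comm, Nat.add_sub in H by lia.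
  rewrite H. f_equal. f_equal. lia.
Qed.

Lemma Badm_app_l (S : Type) (Lam : biseq S -> Prop) (u v : word S) :
  Badm Lam (u ++ v) -> Badm Lam u.
Proof. intros [x [Hx Ho]]. exists x. split; [exact Hx | exact (occurs_app_l _ _ _ _ Ho)]. Qed.

Lemma Badm_app_r (S : Type) (Lam : biseq S -> Prop) (u v : word S) :
  Badm Lam (u ++ v) -> Badm Lam v.
Proof. intros [x [Hx Ho]]. exists x. split; [exact Hx | exact (occurs_app_r _ _ _ _ Ho)]. Qed.

Lemma cls_eq (S : Type) (Lam : biseq S -> Prop) l (mu nu : word S) :
  sim Lam l mu nu -> cls Lam l mu = cls Lam l nu.
Proof.
  intros H. apply functional_extensionality. intros w.
  apply propositional_extensionality. unfold cls, sim in *.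
  split; intros [Hs Hw]; split; auto; intros v; rewrite Hw; [apply H | symmetry; apply H].
Qed.

Lemma cls_sim (S : Type) (Lam : biseq S -> Prop) l (mu nu : word S) :
  sync Lam l mu -> cls Lam l mu = cls Lam l nu -> sim Lam l mu nu.
Proof.
  intros Hs H. assert (Hmu : cls Lam l mu mu) by (split; [exact Hs | intro; reflexivity]).
  rewrite H in Hmu. apply Hmu.
Qed.

Lemma shiftk_app (A : Type) k (x : nat -> A) n : shiftk k x n = x (k + n).
Proof.
  revert x n. induction k as [|k IH]; intros x n; [reflexivity|].
  change (shiftk (S k) x n) with (shiftk k x (S n)). rewrite IH. f_equal. lia.
Qed.

(** * Gap shifts *)

Definition gap_word (m : nat) : list bool := true :: repeat false m ++ [true].

Lemma length_gap_word m : length (gap_word m) = S (S m).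
Proof. unfold gap_word. simpl. rewrite length_app, repeat_length. simpl. lia. Qed.

Lemma nth_error_gap_word_zero m i :
  1 <= i <= m -> nth_error (gap_word m) i = Some false.
Proof.
  intros Hi. destruct i as [|i]; [lia|]. unfold gap_word. cbn [nth_error].
  rewrite nth_error_app1 by (rewrite repeat_length; lia). apply nth_error_repeat. lia.
Qed.

Lemma nth_error_gap_word_last m : nth_error (gap_word m) (S m) = Some true.
Proof.
  unfold gap_word. cbn [nth_error].
  rewrite nth_error_app2, repeat_length, Nat.sub_diag by (rewrite repeat_length; lia).
  reflexivity.
Qed.

Definition gap_at (y : biseq bool) (k : Z) (m : nat) : Prop :=
  y k = true /\ y (k + Z.of_nat m + 1)%Z = true /\
  forall j : nat, 1 <= j <= m -> y (k + Z.of_nat j)%Z = false.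

Lemma occurs_gap_word m y : occurs (gap_word m) y <-> exists k, gap_at y k m.
Proof.
  split.
  - intros [k H]. exists k. rewrite length_gap_word in H. split; [|split].
    + specialize (H 0 ltac:(lia)). rewrite Z.add_0_r in H. simpl in H. congruence.
    + specialize (H (S m) ltac:(lia)). rewrite nth_error_gap_word_last in H.
      rewrite Nat2Z.inj_succ, Z.add_succ_r in H. rewrite <- Z.add_1_r in H. congruence.
    + intros j Hj. specialize (H j ltac:(lia)).
      rewrite nth_error_gap_word_zero in H by exact Hj. congruence.
  - intros [k [H0 [Hm Hz]]]. exists k. rewrite length_gap_word. intros i Hi.
    destruct (Nat.eq_dec i 0) as [->|Hi0]; [rewrite Z.add_0_r; simpl; congruence|].
    destruct (Nat.le_gt_cases i m) as [Him|Him].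
    + rewrite nth_error_gap_word_zero, Hz by lia. reflexivity.
    + replace i with (S m) by lia. rewrite nth_error_gap_word_last, <- Hm.
      f_equal. f_equal. lia.
Qed.

Lemma no_one_zeros (w : list bool) : ~ In true w -> w = repeat false (length w).
Proof.
  induction w as [|[] w IH]; intros H; [reflexivity | destruct H; left; reflexivity |].
  simpl. f_equal. apply IH. intros Hw. apply H. right. exact Hw.
Qed.

Lemma first_one_split (w : list bool) : In true w -> exists j r, w = repeat false j ++ true :: r.
Proof.
  induction w as [|[] w IH]; intros H; [destruct H | exists 0, w; reflexivity |].
  destruct H as [H|H]; [discriminate|]. destruct (IH H) as [j [r ->]]. exists (S j), r. reflexivity.
Qed.

Lemma last_one_split (w : list bool) : In true w -> exists p t, w = p ++ true :: repeat false t.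
Proof.
  induction w as [|a w IH]; intros H; [destruct H|].
  destruct (in_dec bool_dec true w) as [Hw|Hw].
  - destruct (IH Hw) as [p [t ->]]. exists (a :: p), t. reflexivity.
  - destruct H as [<-|H]; [|contradiction]. exists [], (length w). simpl. f_equal.
    now apply no_one_zeros.
Qed.

Lemma last_one_unit l p t : repeat false l ++ [true] = p ++ true :: repeat false t -> t = 0.
Proof.
  intros H. destruct t as [|t]; [reflexivity|].
  apply (f_equal (fun w => last w false)) in H. rewrite last_last in H.
  rewrite <- (Nat.add_1_r t), repeat_app, app_comm_cons, app_assoc in H. cbn [repeat] in H.
  rewrite last_last in H. discriminate.
Qed.

Definition gap_shift (allowed : nat -> bool) (y : biseq bool) : Prop :=
  forall k m, allowed m = false -> ~ gap_at y k m.

Definition pad (w : list bool) : biseq bool :=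
  fun z => if (z <? 0)%Z then false else nth (Z.to_nat z) w false.

Lemma occurs_pad w : occurs w (pad w).
Proof.
  exists 0%Z. intros i Hi. rewrite nth_error_nth' with (d := false) by exact Hi.
  unfold pad. rewrite Z.add_0_l. destruct (Z.ltb_spec (Z.of_nat i) 0); [lia|].
  rewrite Nat2Z.id. reflexivity.
Qed.

Lemma pad_true w z : pad w z = true -> (0 <= z)%Z /\ nth (Z.to_nat z) w false = true.
Proof. unfold pad. destruct (Z.ltb_spec z 0); [discriminate | auto]. Qed.

Lemma nth_zeros_one a w i : nth i (repeat false a ++ true :: w) false = true ->
  i = a \/ (a < i /\ nth (i - S a) w false = true).
Proof.
  intros H. destruct (Nat.lt_trichotomy i a) as [Hi|[Hi|Hi]]; [|auto|].
  - rewrite app_nth1, nth_repeat in H by (rewrite repeat_length; lia). discriminate.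
  - rewrite app_nth2, repeat_length in H by (rewrite repeat_length; lia).
    replace (i - a) with (S (i - S a)) in H by lia. auto.
Qed.

Lemma nth_single_one a c i : nth i (repeat false a ++ true :: repeat false c) false = true -> i = a.
Proof.
  intros H. destruct (nth_zeros_one _ _ _ H) as [|[_ H']]; [auto|].
  now rewrite nth_repeat in H'.
Qed.

Lemma nth_gap_word m i : nth i (gap_word m) false = true -> i = 0 \/ i = S m.
Proof.
  change (gap_word m) with (repeat false 0 ++ true :: (repeat false m ++ true :: repeat false 0)).
  intros H. destruct (nth_zeros_one _ _ _ H) as [|[Hi H']]; [auto|].
  apply nth_single_one in H'. lia.
Qed.

Section GapShift.

Variable allowed : nat -> bool.
Hypothesis allowed_S : forall m, allowed (S m) = negb (allowed m).

Local Notation adm := (Badm (gap_shift allowed)).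

Lemma adm_single_one a c : adm (repeat false a ++ true :: repeat false c).
Proof.
  exists (pad (repeat false a ++ true :: repeat false c)). split; [|apply occurs_pad].
  intros k m _ [H1 [H2 _]].
  apply pad_true in H1 as [Hk H1]. apply pad_true in H2 as [_ H2].
  apply nth_single_one in H1. apply nth_single_one in H2. lia.
Qed.

Lemma adm_gap_word m : adm (gap_word m) <-> allowed m = true.
Proof.
  split.
  - intros [y [Hy Ho]]. destruct (allowed m) eqn:E; [reflexivity|].
    apply occurs_gap_word in Ho as [k Hk]. destruct (Hy k m E Hk).
  - intros Hm. exists (pad (gap_word m)). split; [|apply occurs_pad].
    intros k m' Hm' [H1 [H2 _]].
    apply pad_true in H1 as [Hk H1]. apply pad_true in H2 as [_ H2].
    apply nth_gap_word in H1. apply nth_gap_word in H2.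
    replace m' with m in Hm' by lia. congruence.
Qed.

(* A 1 is a synchronizing symbol: two admissible words overlapping in a 1 glue. *)
Lemma adm_glue u v : adm (u ++ [true]) -> adm (true :: v) -> adm (u ++ true :: v).
Proof.
  intros [x [Hx [k1 Ox]]] [y [Hy [k2 Oy]]].
  set (P := (k1 + Z.of_nat (length u))%Z).
  assert (xP : x P = true).
  { specialize (Ox (length u) ltac:(rewrite length_app; simpl; lia)).
    rewrite nth_error_app2, Nat.sub_diag in Ox by lia. simpl in Ox. unfold P. congruence. }
  assert (yk : y k2 = true).
  { specialize (Oy 0 ltac:(simpl; lia)). simpl in Oy. rewrite Z.add_0_r in Oy. congruence. }
  set (z := fun m => if (m <=? P)%Z then x m else y (m - P + k2)%Z).
  assert (zL : forall m, (m <= P)%Z -> z m = x m).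
  { intros m Hm. unfold z. destruct (Z.leb_spec m P); [reflexivity | lia]. }
  assert (zR : forall m, (P <= m)%Z -> z m = y (m - P + k2)%Z).
  { intros m Hm. unfold z. destruct (Z.leb_spec m P); [|reflexivity].
    replace m with P by lia. rewrite xP, Z.sub_diag, Z.add_0_l. auto. }
  exists z. split.
  - intros k m Hm [H1 [H2 H3]].
    destruct (Z_le_gt_dec (k + Z.of_nat m + 1) P); [|destruct (Z_le_gt_dec P k)].
    + apply (Hx k m Hm). split; [|split]; [rewrite <- zL by lia; auto ..|].
      intros j Hj. rewrite <- zL by lia. auto.
    + apply (Hy (k - P + k2)%Z m Hm). split; [|split].
      * rewrite <- zR by lia. auto.
      * rewrite zR in H2 by lia. rewrite <- H2. f_equal. lia.
      * intros j Hj. specialize (H3 j Hj). rewrite zR in H3 by lia. rewrite <- H3. f_equal. lia.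
    + specialize (H3 (Z.to_nat (P - k)) ltac:(lia)).
      rewrite Z2Nat.id, Z.add_comm, Z.sub_add, zL in H3 by lia. congruence.
  - exists k1. intros i Hi. rewrite length_app in Hi. simpl in Hi.
    destruct (Nat.ltb_spec i (length u)).
    + rewrite nth_error_app1, zL by lia.
      specialize (Ox i ltac:(rewrite length_app; simpl; lia)).
      rewrite nth_error_app1 in Ox by auto. auto.
    + rewrite nth_error_app2, zR by lia.
      specialize (Oy (i - length u) ltac:(simpl; lia)). rewrite Oy. f_equal. f_equal. lia.
Qed.

(** * Synchronizing words *)

Lemma allowed_parity n : allowed n = xorb (allowed 0) (Nat.odd n).
Proof.
  induction n as [|n IH]; [now destruct (allowed 0)|].
  rewrite allowed_S, IH, Nat.odd_succ, <- Nat.negb_odd. now destruct (allowed 0), (Nat.odd n).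
Qed.

Lemma allowed_add t j : allowed (t + j) = xorb (xorb (allowed t) (allowed 0)) (allowed j).
Proof.
  rewrite (allowed_parity (t + j)), (allowed_parity t), (allowed_parity j), Nat.odd_add.
  now destruct (allowed 0), (Nat.odd t), (Nat.odd j).
Qed.

(* The words of length l that may precede a 1 at distance j. *)
Definition pred_set (l j : nat) (w : list bool) : Prop :=
  Bl (gap_shift allowed) l w /\
  forall p t, w = p ++ true :: repeat false t -> allowed (t + j) = true.

Lemma adm_app_gap w j : adm (w ++ repeat false j ++ [true]) <->
  adm w /\ forall p t, w = p ++ true :: repeat false t -> allowed (t + j) = true.
Proof.
  assert (Hshape : forall p t, (p ++ true :: repeat false t) ++ repeat false j ++ [true]
                             = p ++ gap_word (t + j)).
  { intros p t. unfold gap_word. now rewrite repeat_app, <- app_assoc, <- app_assoc. }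
  split.
  - intros H. split; [exact (Badm_app_l _ _ _ _ H)|]. intros p t ->.
    apply adm_gap_word. rewrite Hshape in H. exact (Badm_app_r _ _ _ _ H).
  - intros [Hw Hc]. destruct (in_dec bool_dec true w) as [Hi|Hi].
    + destruct (last_one_split w Hi) as [p [t ->]]. rewrite Hshape. apply adm_glue.
      * apply Badm_app_l with (v := repeat false t). now rewrite <- app_assoc.
      * apply adm_gap_word. exact (Hc p t eq_refl).
    + rewrite (no_one_zeros w Hi), app_assoc, <- repeat_app. apply (adm_single_one _ 0).
Qed.

Lemma Gamma_minus_lead j r l w : adm (repeat false j ++ true :: r) ->
  Gamma_minus (gap_shift allowed) l (repeat false j ++ true :: r) w <-> pred_set l j w.
Proof.
  intros Hadm.
  assert (Hcut : adm (w ++ repeat false j ++ true :: r) <-> adm (w ++ repeat false j ++ [true])).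
  { split; intros H.
    - apply Badm_app_l with (v := r). now rewrite <- !app_assoc.
    - rewrite app_assoc. apply adm_glue; [now rewrite <- app_assoc|].
      exact (Badm_app_r _ _ _ _ Hadm). }
  unfold Gamma_minus, pred_set. rewrite Hcut, adm_app_gap.
  split; intros [Hb H]; [exact (conj Hb (proj2 H)) | exact (conj Hb (conj (proj1 Hb) H))].
Qed.

Lemma pred_set_parity l j j' w : allowed j = allowed j' -> (pred_set l j w <-> pred_set l j' w).
Proof.
  intros E. unfold pred_set.
  split; intros [Hb H]; split; auto; intros p t Hp; specialize (H p t Hp);
  rewrite allowed_add in *; congruence.
Qed.

Lemma pred_set_unit l j : pred_set (S l) j (repeat false l ++ [true]) <-> allowed j = true.
Proof.
  split.
  - intros [_ H]. exact (H (repeat false l) 0 eq_refl).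
  - intros H. split; [split|].
    + apply (adm_single_one l 0).
    + rewrite length_app, repeat_length. simpl. lia.
    + intros p t Hp. apply last_one_unit in Hp. now subst.
Qed.

Lemma sim_lead l j r j' r' :
  adm (repeat false j ++ true :: r) -> adm (repeat false j' ++ true :: r') ->
  allowed j = allowed j' ->
  sim (gap_shift allowed) l (repeat false j ++ true :: r) (repeat false j' ++ true :: r').
Proof.
  intros H H' E w. rewrite (Gamma_minus_lead _ _ _ _ H), (Gamma_minus_lead _ _ _ _ H').
  now apply pred_set_parity.
Qed.

Lemma sim_lead_parity l j r j' r' :
  adm (repeat false j ++ true :: r) -> adm (repeat false j' ++ true :: r') ->
  sim (gap_shift allowed) (S l) (repeat false j ++ true :: r) (repeat false j' ++ true :: r') ->
  allowed j = allowed j'.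
Proof.
  intros H H' Hs. specialize (Hs (repeat false l ++ [true])).
  rewrite (Gamma_minus_lead _ _ _ _ H), (Gamma_minus_lead _ _ _ _ H'), !pred_set_unit in Hs.
  destruct (allowed j), (allowed j'); intuition.
Qed.

Lemma sync_lead l j r : adm (repeat false j ++ true :: r) ->
  sync (gap_shift allowed) l (repeat false j ++ true :: r).
Proof.
  intros Hadm. split; [exact Hadm|]. intros omega Hom nu.
  unfold Gamma_plus in Hom. rewrite <- app_assoc in Hom |- *.
  now rewrite (Gamma_minus_lead _ _ _ _ Hadm), (Gamma_minus_lead _ _ _ _ Hom).
Qed.

(* Appending zeros to a block of zeros changes which words may precede it. *)
Lemma not_sync_zeros l k : ~ sync (gap_shift allowed) (S l) (repeat false k).
Proof.
  intros [_ Hs].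
  set (e := if allowed k then 1 else 0).
  assert (He : allowed (k + e) = false).
  { unfold e. destruct (allowed k) eqn:E.
    - now rewrite Nat.add_1_r, allowed_S, E.
    - now rewrite Nat.add_0_r. }
  assert (Hom : Gamma_plus (gap_shift allowed) (repeat false k) (repeat false e ++ [true])).
  { unfold Gamma_plus. rewrite app_assoc, <- repeat_app. apply (adm_single_one _ 0). }
  assert (Hl : Gamma_minus (gap_shift allowed) (S l) (repeat false k) (repeat false l ++ [true])).
  { split; [split|].
    - apply (adm_single_one l 0).
    - rewrite length_app, repeat_length. simpl. lia.
    - rewrite <- app_assoc. apply adm_single_one. }
  apply (Hs _ Hom) in Hl as [_ Hl].
  rewrite (app_assoc (repeat false k)), <- repeat_app in Hl. apply adm_app_gap in Hl as [_ Hl].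
  specialize (Hl (repeat false l) 0 eq_refl). simpl in Hl. congruence.
Qed.

Lemma sync_lead_form l nu : sync (gap_shift allowed) (S l) nu ->
  exists j r, nu = repeat false j ++ true :: r /\ adm (repeat false j ++ true :: r).
Proof.
  intros Hs. destruct (in_dec bool_dec true nu) as [Hi|Hi].
  - destruct (first_one_split nu Hi) as [j [r ->]]. exists j, r. split; [reflexivity | apply Hs].
  - rewrite (no_one_zeros nu Hi) in Hs. destruct (not_sync_zeros _ _ Hs).
Qed.

(** * The minimal presentation *)

(* The vertex labelled b is the class of 0^j 1 for the j in {0,1} with allowed j = b. *)
Definition lead (b : bool) : nat := if Bool.eqb b (allowed 0) then 0 else 1.

Lemma allowed_lead b : allowed (lead b) = b.
Proof.
  unfold lead. destruct (allowed 0) eqn:E, b; simpl; rewrite ?allowed_S, ?E; reflexivity.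
Qed.

Definition rep (b : bool) : list bool := repeat false (lead b) ++ [true].

Definition vtx (b : bool) (l : nat) : word bool -> Prop := cls (gap_shift allowed) l (rep b).

Lemma sync_rep l b : sync (gap_shift allowed) l (rep b).
Proof. apply sync_lead, (adm_single_one _ 0). Qed.

Lemma vtx_inj l b b' : vtx b (S l) = vtx b' (S l) -> b = b'.
Proof.
  intros H. apply cls_sim in H; [|apply sync_rep].
  apply sim_lead_parity in H; try apply (adm_single_one _ 0).
  now rewrite !allowed_lead in H.
Qed.

Lemma cls_lead l j r : adm (repeat false j ++ true :: r) ->
  cls (gap_shift allowed) l (repeat false j ++ true :: r) = vtx (allowed j) l.
Proof.
  intros H. apply cls_eq, sim_lead; [exact H | apply (adm_single_one _ 0) |].
  now rewrite allowed_lead.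
Qed.

Lemma Omega_vtx b : Omega (gap_shift allowed) (vtx b).
Proof.
  split; intros l; exists (rep b); (split; [apply sync_rep | auto]).
Qed.

Lemma Omega_vtx_inv u : Omega (gap_shift allowed) u -> exists b, u = vtx b.
Proof.
  intros [_ Hu].
  assert (Hlev : forall l, exists b, u l = vtx b l /\ u (S l) = vtx b (S l)).
  { intros l. destruct (Hu l) as [nu [Hs [E1 E2]]].
    destruct (sync_lead_form _ _ Hs) as [j [r [-> Hadm]]]. exists (allowed j).
    now rewrite E1, E2, !cls_lead. }
  destruct (Hlev 0) as [b [E0 E1]]. exists b.
  assert (HS : forall l, u (S l) = vtx b (S l)).
  { induction l as [|l IH]; [exact E1|]. destruct (Hlev (S l)) as [b' [F1 F2]].
    rewrite IH in F1. apply vtx_inj in F1. now subst. }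
  apply functional_extensionality. intros [|l]; [exact E0 | apply HS].
Qed.

Definition step (b : bool) (ab : bool * bool) : Prop :=
  if fst ab then b = allowed 0 /\ snd ab = true else b = negb (snd ab).

Lemma edge_vtx l b a b' : step b (a, b') -> edge (gap_shift allowed) l (vtx b l) a (vtx b' (S l)).
Proof.
  intros Hst. exists (rep b'). split; [apply sync_rep|].
  unfold step in Hst. destruct a; simpl in Hst.
  - destruct Hst as [-> ->].
    assert (Hadm : adm (repeat false 0 ++ true :: rep true)).
    { apply adm_gap_word, allowed_lead. }
    repeat split; [exact Hadm | now rewrite (cls_lead _ _ _ Hadm)].
  - subst b. assert (Hadm : adm (repeat false (S (lead b')) ++ true :: [])).
    { apply (adm_single_one _ 0). }
    repeat split; [exact Hadm|]. now rewrite (cls_lead _ _ _ Hadm), allowed_S, allowed_lead.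
Qed.

Lemma edge_vtx_inv b a b' :
  edge (gap_shift allowed) 1 (vtx b 1) a (vtx b' 2) -> step b (a, b').
Proof.
  intros [nu [Hs [Ha [Hv Hw]]]].
  destruct (sync_lead_form _ _ Hs) as [j [r [-> Hn]]].
  rewrite cls_lead in Hw by exact Hn. apply vtx_inj in Hw. subst b'.
  destruct a; simpl.
  - change (true :: repeat false j ++ true :: r)
      with (repeat false 0 ++ true :: (repeat false j ++ true :: r)) in Hv, Ha.
    rewrite cls_lead in Hv by exact Ha. apply vtx_inj in Hv. split; [exact Hv|].
    apply adm_gap_word, (Badm_app_l _ _ _ r). simpl in Ha |- *. now rewrite <- app_assoc.
  - change (false :: repeat false j ++ true :: r) with (repeat false (S j) ++ true :: r) in Hv, Ha.
    rewrite cls_lead in Hv by exact Ha. apply vtx_inj in Hv. now rewrite Hv, allowed_S.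
Qed.

Lemma EL_vtx b a b' : EL (gap_shift allowed) (vtx b) a (vtx b') <-> step b (a, b').
Proof.
  split.
  - intros [_ [_ He]]. exact (edge_vtx_inv _ _ _ (He 1)).
  - intros Hst. repeat split; try apply Omega_vtx. intros l. now apply edge_vtx.
Qed.

(* A point of X_L is a symbol sequence together with the vertex labels, which are
   all of the form vtx b; [decode] reads b off the level-1 vertex. *)
Definition encode (p : nat -> bool * bool) : Lpoint bool := fun i => (fst (p i), vtx (snd (p i))).

Definition label (x : Lpoint bool) (i : nat) : bool :=
  if excluded_middle_informative (snd (x i) 1 = vtx true 1) then true else false.

Definition decode (x : Lpoint bool) (i : nat) : bool * bool := (fst (x i), label x i).

Definition valid (p : nat -> bool * bool) : Prop :=
  (exists b0, step b0 (p 0)) /\ forall i, step (snd (p i)) (p (S i)).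

Lemma label_vtx b x i : snd (x i) = vtx b -> label x i = b.
Proof.
  intros H. unfold label. rewrite H.
  destruct excluded_middle_informative as [E|E]; destruct b; try reflexivity.
  - symmetry. exact (vtx_inj _ _ _ E).
  - destruct (E eq_refl).
Qed.

Lemma decode_encode p : decode (encode p) = p.
Proof.
  apply functional_extensionality. intros i. unfold decode.
  rewrite (label_vtx (snd (p i))) by reflexivity. simpl. symmetry. apply surjective_pairing.
Qed.

Lemma XL_decode x : XL (gap_shift allowed) x -> x = encode (decode x) /\ valid (decode x).
Proof.
  intros [u0 [H0 Hi]].
  assert (Hvtx : forall i, snd (x i) = vtx (label x i)).
  { intros i. destruct (Omega_vtx_inv _ (proj1 (Hi i))) as [b Hb].
    now rewrite (label_vtx _ _ _ Hb). }
  split; [|split].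
  - apply functional_extensionality. intros i. unfold encode, decode. simpl.
    rewrite <- Hvtx. apply surjective_pairing.
  - destruct (Omega_vtx_inv _ (proj1 H0)) as [b0 E0]. exists b0.
    unfold decode. apply EL_vtx. now rewrite <- E0, <- Hvtx.
  - intros i. unfold decode. simpl. apply EL_vtx. now rewrite <- !Hvtx.
Qed.

Lemma XL_encode p : valid p -> XL (gap_shift allowed) (encode p).
Proof.
  intros [[b0 H0] Hi]. exists (vtx b0). split.
  - apply EL_vtx. simpl. now rewrite <- surjective_pairing.
  - intros i. apply EL_vtx. simpl. now rewrite <- surjective_pairing.
Qed.

Lemma valid_shift p : valid p -> valid (shift p).
Proof. intros [_ Hi]. split; [exists (snd (p 0)); apply Hi | intros i; apply Hi]. Qed.

Lemma valid_step_before p i : valid p -> exists b, step b (p i).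
Proof. intros [[b0 H0] Hi]. destruct i as [|i]; [exists b0 | exists (snd (p i))]; auto. Qed.

Definition gap_free (x : nat -> bool) : Prop :=
  forall k m, allowed m = false ->
    ~ (x k = true /\ x (k + m + 1) = true /\ forall j, 1 <= j <= m -> x (k + j) = false).

Lemma XLam_gap_free x : XLam (gap_shift allowed) x <-> gap_free x.
Proof.
  split.
  - intros [y [Hy Hyx]] k m Hm [H1 [H2 H3]]. apply (Hy (Z.of_nat k) m Hm). split; [|split].
    + now rewrite Hyx.
    + replace (Z.of_nat k + Z.of_nat m + 1)%Z with (Z.of_nat (k + m + 1)) by lia.
      now rewrite Hyx.
    + intros j Hj. rewrite <- Nat2Z.inj_add, Hyx. auto.
  - intros Hx. exists (fun z => if (z <? 0)%Z then false else x (Z.to_nat z)). split.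
    + intros k m Hm [H1 [H2 H3]].
      destruct (Z.ltb_spec k 0); [discriminate|].
      apply (Hx (Z.to_nat k) m Hm). split; [|split]; [exact H1 | |].
      * destruct (Z.ltb_spec (k + Z.of_nat m + 1) 0); [lia|].
        rewrite <- H2. f_equal. lia.
      * intros j Hj. specialize (H3 j Hj). destruct (Z.ltb_spec (k + Z.of_nat j) 0); [lia|].
        rewrite <- H3. f_equal. lia.
    + intros n. destruct (Z.ltb_spec (Z.of_nat n) 0); [lia|]. now rewrite Nat2Z.id.
Qed.

(* Along a run of zeros the label alternates, so a gap of length m forces allowed m. *)
Lemma valid_gap_free p : valid p -> gap_free (fun i => fst (p i)).
Proof.
  intros Hv k m Hm [H1 [H2 H3]].
  destruct (valid_step_before p k Hv) as [b Hb]. unfold step in Hb.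
  rewrite H1 in Hb. destruct Hb as [_ Hk].
  assert (Hrun : forall j, j <= m -> snd (p (k + j)) = Nat.even j).
  { induction j as [|j IH]; intros Hj; [now rewrite Nat.add_0_r|].
    pose proof (proj2 Hv (k + j)) as St. unfold step in St.
    rewrite <- Nat.add_succ_r, H3 in St by lia. simpl in St.
    rewrite IH in St by lia. rewrite Nat.even_succ, <- Nat.negb_even, St.
    now destruct (snd (p (k + S j))). }
  pose proof (proj2 Hv (k + m)) as St. unfold step in St.
  rewrite <- Nat.add_1_r, H2, Hrun in St by lia. destruct St as [St _].
  rewrite allowed_parity, <- St, <- Nat.negb_even in Hm. now destruct (Nat.even m).
Qed.

Definition next_one (x : nat -> bool) (i n : nat) : Prop :=
  x (i + S n) = true /\ forall n', n' < n -> x (i + S n') = false.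

Lemma next_one_unique x i n n' : next_one x i n -> next_one x i n' -> n = n'.
Proof.
  intros [H1 H2] [H1' H2']. destruct (Nat.lt_trichotomy n n') as [L|[L|L]]; auto.
  - rewrite H2' in H1 by exact L. discriminate.
  - rewrite H2 in H1' by exact L. discriminate.
Qed.

Lemma next_one_zero x i : x (S i) = true -> next_one x i 0.
Proof. intros H. split; [now rewrite Nat.add_1_r | lia]. Qed.

Lemma next_one_succ x i n : x (S i) = false -> next_one x (S i) n <-> next_one x i (S n).
Proof.
  intros H0. unfold next_one. replace (i + S (S n)) with (S i + S n) by lia.
  split; intros [H1 H2]; split; auto.
  - intros [|n'] Hn; [now rewrite Nat.add_1_r|].
    replace (i + S (S n')) with (S i + S n') by lia. apply H2. lia.
  - intros n' Hn. replace (S i + S n') with (i + S (S n')) by lia. apply H2. lia.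
Qed.

Fixpoint last_one (x : nat -> bool) (i : nat) : nat :=
  match i with 0 => 0 | S i' => if x i then i else last_one x i' end.

Lemma last_one_le x i : last_one x i <= i.
Proof. induction i as [|i IH]; simpl; [lia | destruct (x (S i)); lia]. Qed.

(* The label of position i is allowed n for the distance n to the next 1;
   after the last 1 it is the parity of the distance to that 1. *)
Definition gap_label (x : nat -> bool) (i : nat) : bool :=
  match excluded_middle_informative (exists n, next_one x i n) with
  | left H => allowed (proj1_sig (constructive_indefinite_description _ H))
  | right _ => Nat.even (i - last_one x i)
  end.

Lemma gap_label_next x i n : next_one x i n -> gap_label x i = allowed n.
Proof.
  intros Hn. unfold gap_label. destruct excluded_middle_informative as [H|H].
  - destruct (constructive_indefinite_description _ H) as [n' Hn']. simpl.
    now rewrite (next_one_unique _ _ _ _ Hn Hn').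
  - destruct H. now exists n.
Qed.

Lemma gap_label_none x i :
  ~ (exists n, next_one x i n) -> gap_label x i = Nat.even (i - last_one x i).
Proof. intros Hn. unfold gap_label. now destruct excluded_middle_informative. Qed.

Lemma gap_label_one x i : gap_free x -> x i = true -> gap_label x i = true.
Proof.
  intros Hx Hi. destruct (classic (exists n, next_one x i n)) as [[n [Hn1 Hn2]]|Hn].
  - rewrite (gap_label_next _ _ n) by (split; assumption).
    destruct (allowed n) eqn:E; [reflexivity|]. exfalso. apply (Hx i n E). split; [|split].
    + exact Hi.
    + now replace (i + n + 1) with (i + S n) by lia.
    + intros j Hj. replace j with (S (j - 1)) by lia. apply Hn2. lia.
  - rewrite gap_label_none by exact Hn. destruct i as [|i]; [reflexivity|].
    simpl. rewrite Hi, Nat.sub_diag. reflexivity.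
Qed.

Lemma gap_free_valid x : gap_free x -> valid (fun i => (x i, gap_label x i)).
Proof.
  intros Hx. split.
  - destruct (x 0) eqn:E.
    + exists (allowed 0). split; [reflexivity | now apply gap_label_one].
    + exists (negb (gap_label x 0)). reflexivity.
  - intros i. unfold step. simpl. destruct (x (S i)) eqn:E.
    + split; [apply gap_label_next, next_one_zero, E | now apply gap_label_one].
    + destruct (classic (exists n, next_one x (S i) n)) as [[n Hn]|Hn].
      * rewrite (gap_label_next _ _ _ Hn), (gap_label_next x i (S n)), allowed_S.
        -- reflexivity.
        -- now apply next_one_succ.
      * assert (Hn' : ~ exists n, next_one x i n).
        { intros [[|n] H]; [destruct H as [H _]; rewrite Nat.add_1_r in H; congruence|].
          apply Hn. exists n. now apply next_one_succ. }
        rewrite !gap_label_none by assumption.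
        replace (last_one x (S i)) with (last_one x i) by (simpl; now rewrite E).
        pose proof (last_one_le x i).
        replace (S i - last_one x i) with (S (i - last_one x i)) by lia.
        now rewrite Nat.even_succ, <- Nat.negb_even, negb_involutive.
Qed.

End GapShift.

Lemma even_succ_negb m : Nat.even (S m) = negb (Nat.even m).
Proof. now rewrite Nat.even_succ, <- Nat.negb_even. Qed.

Lemma odd_succ_negb m : Nat.odd (S m) = negb (Nat.odd m).
Proof. now rewrite Nat.odd_succ, <- Nat.negb_even, negb_involutive. Qed.

Lemma even_shift_eq : even_shift = gap_shift Nat.even.
Proof.
  apply functional_extensionality. intros y. apply propositional_extensionality. split.
  - intros H k m Hm Hk. destruct (Nat.Even_or_Odd m) as [Ev|[n ->]].
    + apply Nat.even_spec in Ev. congruence.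
    + apply (H n), occurs_gap_word. now exists k.
  - intros H n Ho. apply occurs_gap_word in Ho as [k Hk]. apply (H k (2 * n + 1)); [|exact Hk].
    now rewrite Nat.add_1_r, even_succ_negb, Nat.even_mul.
Qed.

Lemma odd_shift_eq : odd_shift = gap_shift Nat.odd.
Proof.
  apply functional_extensionality. intros y. apply propositional_extensionality. split.
  - intros H k m Hm Hk. destruct (Nat.Even_or_Odd m) as [[n ->]|Od].
    + apply (H n), occurs_gap_word. now exists k.
    + apply Nat.odd_spec in Od. congruence.
  - intros H n Ho. apply occurs_gap_word in Ho as [k Hk]. apply (H k (2 * n)); [|exact Hk].
    now rewrite <- Nat.negb_even, Nat.even_mul.
Qed.

(** * The substitution 1 -> 10 *)

(* A 0 keeps its distance to the next 1 while the allowed parity flips, so its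
   label is negated; a 1 (always labelled true) becomes 10 labelled true, false. *)
Definition head_image (ab : bool * bool) : bool * bool :=
  if fst ab then (true, true) else (false, negb (snd ab)).

Lemma fst_head_image ab : fst (head_image ab) = fst ab.
Proof. now destruct ab as [[] s]. Qed.

Fixpoint expand (p : nat -> bool * bool) (n : nat) : bool * bool :=
  match n with
  | 0 => head_image (p 0)
  | S n' => if fst (p 0) then
              match n' with 0 => (false, negb (snd (p 0))) | S n'' => expand (shift p) n'' end
            else expand (shift p) n'
  end.

(* Its inverse: delete the 0 following each 1. *)
Fixpoint contract (q : nat -> bool * bool) (n : nat) : bool * bool :=
  match n with
  | 0 => if fst (q 0) then (true, negb (snd (q 1))) else (false, negb (snd (q 0)))
  | S n' => if fst (q 0) then contract (shift (shift q)) n' else contract (shift q) n'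
  end.

Lemma expand_shift p : expand (shift p) = shiftk (if fst (p 0) then 2 else 1) (expand p).
Proof.
  apply functional_extensionality. intros n. rewrite shiftk_app.
  destruct (fst (p 0)) eqn:E; simpl; now rewrite E.
Qed.

Lemma contract_succ q : shift (contract q) = contract (shiftk (if fst (q 0) then 2 else 1) q).
Proof.
  apply functional_extensionality. intros n. unfold shift at 1.
  destruct (fst (q 0)) eqn:E; simpl; now rewrite E.
Qed.

Lemma contract_expand p : contract (expand p) = p.
Proof.
  apply functional_extensionality. intros n. revert p. induction n as [|n IH]; intros p.
  - simpl. unfold head_image. destruct (p 0) as [[] s]; simpl; now rewrite negb_involutive.
  - change (contract (expand p) (S n)) with (shift (contract (expand p)) n).
    rewrite contract_succ.
    change (fst (expand p 0)) with (fst (head_image (p 0))). rewrite fst_head_image.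
    rewrite <- expand_shift. apply IH.
Qed.

Lemma expand_succ p n : fst (p 0) = false -> expand p (S n) = expand (shift p) n.
Proof. intros E. simpl. now rewrite E. Qed.

Lemma expand_one p : fst (p 0) = true -> expand p 1 = (false, negb (snd (p 0))).
Proof. intros E. simpl. now rewrite E. Qed.

Lemma expand_succ_succ p n : fst (p 0) = true -> expand p (S (S n)) = expand (shift p) n.
Proof. intros E. simpl. now rewrite E. Qed.

Lemma fst_contract_zero q : fst (contract q 0) = fst (q 0).
Proof. simpl. now destruct (fst (q 0)). Qed.

Lemma valid_odd_one q i : valid Nat.odd q -> fst (q i) = true ->
  snd (q i) = true /\ fst (q (S i)) = false /\ snd (q (S i)) = false.
Proof.
  intros Hv Hi. destruct (valid_step_before Nat.odd q i Hv) as [b Hb].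
  unfold step in Hb. rewrite Hi in Hb. destruct Hb as [_ Hs]. split; [exact Hs|].
  pose proof (proj2 Hv i) as St. unfold step in St. rewrite Hs in St.
  destruct (fst (q (S i))); [now destruct St|]. split; [reflexivity|].
  now destruct (snd (q (S i))).
Qed.

Lemma expand_contract q : valid Nat.odd q -> expand (contract q) = q.
Proof.
  intros Hv. apply functional_extensionality. intros n. revert q Hv.
  induction n as [n IH] using lt_wf_ind. intros q Hv.
  pose proof (fst_contract_zero q) as Hc. destruct (fst (q 0)) eqn:E.
  - destruct (valid_odd_one q 0 Hv E) as [Hs0 [Hf1 Hs1]].
    destruct n as [|[|n]].
    + simpl. rewrite E, Hs1. unfold head_image. simpl.
      destruct (q 0) as [a s]. simpl in *. now subst.
    + rewrite expand_one by exact Hc. simpl. rewrite E, Hs1.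
      destruct (q 1) as [a s]. simpl in *. now subst.
    + rewrite expand_succ_succ, contract_succ, E by exact Hc.
      apply (IH n ltac:(lia) (shiftk 2 q)). now do 2 apply valid_shift.
  - destruct n as [|n].
    + simpl. rewrite E. unfold head_image. simpl. rewrite negb_involutive.
      destruct (q 0) as [a s]. simpl in *. now subst.
    + rewrite expand_succ, contract_succ, E by exact Hc.
      apply (IH n ltac:(lia) (shift q)). now apply valid_shift.
Qed.

Lemma expand_first_step p e : step Nat.even e (p 0) -> step Nat.odd (negb e) (expand p 0).
Proof.
  unfold step. simpl. unfold head_image.
  destruct (p 0) as [[] s]; simpl; [intros [-> _]; now split | now intros ->].
Qed.

Lemma expand_step p n : valid Nat.even p -> step Nat.odd (snd (expand p n)) (expand p (S n)).
Proof.
  revert p. induction n as [n IH] using lt_wf_ind. intros p Hv.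
  pose proof (proj2 Hv 0) as H1. destruct (fst (p 0)) eqn:E.
  - destruct (valid_step_before Nat.even p 0 Hv) as [b Hb].
    unfold step in Hb. rewrite E in Hb. destruct Hb as [_ Hs0].
    destruct n as [|[|n]].
    + rewrite expand_one by exact E. simpl. unfold head_image. rewrite E, Hs0. reflexivity.
    + rewrite expand_one, expand_succ_succ, Hs0 by exact E. simpl.
      rewrite Hs0 in H1. exact (expand_first_step (shift p) true H1).
    + rewrite !expand_succ_succ by exact E. apply (IH n ltac:(lia)). now apply valid_shift.
  - destruct n as [|n].
    + rewrite expand_succ by exact E. simpl. unfold head_image at 1. rewrite E. simpl.
      exact (expand_first_step (shift p) _ H1).
    + rewrite !expand_succ by exact E. apply (IH n ltac:(lia)). now apply valid_shift.
Qed.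

Lemma expand_valid p : valid Nat.even p -> valid Nat.odd (expand p).
Proof.
  intros Hv. split; [|intros n; now apply expand_step].
  destruct Hv as [[b0 H0] _]. exists (negb b0). now apply expand_first_step.
Qed.

Lemma contract_first_step q e : valid Nat.odd q -> step Nat.odd e (q 0) ->
  step Nat.even (negb e) (contract q 0).
Proof.
  intros Hv. unfold step. simpl. destruct (fst (q 0)) eqn:E.
  - destruct (valid_odd_one q 0 Hv E) as [_ [_ Hs1]]. rewrite Hs1. intros [-> _]. now split.
  - now intros ->.
Qed.

Lemma contract_step q n : valid Nat.odd q -> step Nat.even (snd (contract q n)) (contract q (S n)).
Proof.
  revert q. induction n as [n IH] using lt_wf_ind. intros q Hv.
  change (contract q (S n)) with (shift (contract q) n). rewrite contract_succ.
  destruct (fst (q 0)) eqn:E; destruct n as [|n].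
  - simpl. rewrite E. apply contract_first_step; [now do 2 apply valid_shift | apply (proj2 Hv 1)].
  - change (contract q (S n)) with (shift (contract q) n). rewrite contract_succ, E.
    apply IH; [lia | now do 2 apply valid_shift].
  - simpl. rewrite E. apply contract_first_step; [now apply valid_shift | apply (proj2 Hv 0)].
  - change (contract q (S n)) with (shift (contract q) n). rewrite contract_succ, E.
    apply IH; [lia | now apply valid_shift].
Qed.

Lemma contract_valid q : valid Nat.odd q -> valid Nat.even (contract q).
Proof.
  intros Hv. split; [|intros n; now apply contract_step].
  pose proof Hv as [[b0 H0] _]. exists (negb b0). now apply contract_first_step.
Qed.

(** * Continuity and the orbit equivalence *)

Lemma expand_fst p p' n :
  (forall i, fst (p i) = fst (p' i)) -> fst (expand p n) = fst (expand p' n).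
Proof.
  revert p p'. induction n as [n IH] using lt_wf_ind. intros p p' E.
  destruct n as [|n]; simpl.
  - rewrite !fst_head_image. apply E.
  - rewrite (E 0). destruct (fst (p' 0)); [destruct n as [|n]; [reflexivity|] |];
      apply IH; [lia | intros i; apply E | lia | intros i; apply E].
Qed.

Lemma contract_fst q q' n :
  (forall i, fst (q i) = fst (q' i)) -> fst (contract q n) = fst (contract q' n).
Proof.
  revert q q'. induction n as [|n IH]; intros q q' E; simpl; rewrite (E 0).
  - now destruct (fst (q' 0)).
  - destruct (fst (q' 0)); apply IH; intros i; apply E.
Qed.

Lemma expand_prefix n p p' : (forall i, i <= n -> p i = p' i) -> expand p n = expand p' n.
Proof.
  revert p p'. induction n as [n IH] using lt_wf_ind. intros p p' E.
  destruct n as [|n]; simpl; rewrite (E 0) by lia; [reflexivity|].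
  destruct (fst (p' 0)); [destruct n as [|n]; [reflexivity|] |];
    apply IH; try lia; intros i Hi; apply E; lia.
Qed.

Lemma contract_prefix n q q' :
  (forall i, i <= 2 * n + 1 -> q i = q' i) -> contract q n = contract q' n.
Proof.
  revert q q'. induction n as [|n IH]; intros q q' E; simpl; rewrite (E 0) by lia.
  - now rewrite (E 1) by lia.
  - destruct (fst (q' 0)); apply IH; intros i Hi; apply E; lia.
Qed.

Definition prefix_determined {A B : Type} (F : (nat -> A) -> nat -> B) : Prop :=
  forall n, exists N, forall p p', (forall i, i <= N -> p i = p' i) -> F p n = F p' n.

Lemma expand_prefix_determined : prefix_determined expand.
Proof. intros n. exists n. apply expand_prefix. Qed.

Lemma contract_prefix_determined : prefix_determined contract.
Proof. intros n. exists (2 * n + 1). apply contract_prefix. Qed.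

Definition unlabelled (x : nat -> bool) (i : nat) : bool * bool := (x i, false).

Definition expand_seq (x : nat -> bool) (n : nat) : bool := fst (expand (unlabelled x) n).

Definition contract_seq (y : nat -> bool) (n : nat) : bool := fst (contract (unlabelled y) n).

Definition expand_point (x : Lpoint bool) : Lpoint bool :=
  encode Nat.odd (expand (decode Nat.even x)).

Definition contract_point (y : Lpoint bool) : Lpoint bool :=
  encode Nat.even (contract (decode Nat.odd y)).

Lemma fst_expand p n : fst (expand p n) = expand_seq (fun i => fst (p i)) n.
Proof. now apply expand_fst. Qed.

Lemma fst_contract q n : fst (contract q n) = contract_seq (fun i => fst (q i)) n.
Proof. now apply contract_fst. Qed.

Lemma piL_expand_point x : piL (expand_point x) = expand_seq (piL x).
Proof. apply functional_extensionality. intros n. apply fst_expand. Qed.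

Definition prefix_coords (N : nat) : list (nat * option nat) :=
  flat_map (fun i => [(i, None); (i, Some 1)]) (seq 0 (S N)).

Lemma continuous_encode_decode g g' (F : (nat -> bool * bool) -> nat -> bool * bool)
  (D : Lpoint bool -> Prop) : prefix_determined F ->
  continuous_on (@coordL bool) (@coordL bool) D (fun x => encode g (F (decode g' x))).
Proof.
  intros HF x _ [n o]. destruct (HF n) as [N HN]. exists (prefix_coords N). intros y _ Hyx.
  assert (Hd : forall i, i <= N -> decode g' y i = decode g' x i).
  { intros i Hi.
    assert (Hin : forall c, In (i, c) [(i, None); (i, Some 1)] -> In (i, c) (prefix_coords N)).
    { intros c Hc. apply in_flat_map. exists i. split; [apply in_seq; lia | exact Hc]. }
    pose proof (Hyx _ (Hin None (or_introl eq_refl))) as H0.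
    pose proof (Hyx _ (Hin (Some 1) (or_intror (or_introl eq_refl)))) as H1.
    injection H0 as H0. injection H1 as H1. unfold decode, label. now rewrite H0, H1. }
  unfold coordL. simpl. now rewrite (HN _ _ Hd).
Qed.

Lemma continuous_symbols (F : (nat -> bool * bool) -> nat -> bool * bool)
  (D : (nat -> bool) -> Prop) : prefix_determined F ->
  continuous_on (@coordLam bool) (@coordLam bool) D (fun x n => fst (F (unlabelled x) n)).
Proof.
  intros HF x _ n. destruct (HF n) as [N HN]. exists (seq 0 (S N)). intros y _ Hyx.
  unfold coordLam. f_equal. apply HN. intros i Hi. unfold unlabelled.
  f_equal. apply (Hyx i), in_seq. lia.
Qed.

Lemma continuous_first_symbol (Sigma : Type) (f : Sigma -> nat) (D : Lpoint Sigma -> Prop) :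
  continuous_on (@coordL Sigma) coordNat D (fun x => f (fst (x 0))).
Proof.
  intros x _ c. exists [(0, None)]. intros y _ Hyx.
  specialize (Hyx (0, None) (or_introl eq_refl)). injection Hyx as Hyx.
  unfold coordNat. now rewrite Hyx.
Qed.

Lemma homeo_expand_point :
  homeo (@coordL bool) (@coordL bool) (XL (gap_shift Nat.even)) (XL (gap_shift Nat.odd))
    expand_point contract_point.
Proof.
  pose proof (XL_decode _ even_succ_negb) as Heven.
  pose proof (XL_decode _ odd_succ_negb) as Hodd.
  unfold expand_point, contract_point.
  split; [|split; [|split; [|split; [|split]]]].
  - intros x Hx. apply (XL_encode _ odd_succ_negb). apply expand_valid, Heven, Hx.
  - intros y Hy. apply (XL_encode _ even_succ_negb). apply contract_valid, Hodd, Hy.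
  - intros x Hx. rewrite (decode_encode _ odd_succ_negb), contract_expand.
    symmetry. apply Heven, Hx.
  - intros y Hy. rewrite (decode_encode _ even_succ_negb), expand_contract by apply Hodd, Hy.
    symmetry. apply Hodd, Hy.
  - apply continuous_encode_decode, expand_prefix_determined.
  - apply continuous_encode_decode, contract_prefix_determined.
Qed.

Lemma gap_free_expand_seq x : gap_free Nat.even x -> gap_free Nat.odd (expand_seq x).
Proof.
  intros Hx. set (p := fun j => (x j, gap_label Nat.even x j)).
  replace (expand_seq x) with (fun i => fst (expand p i)).
  - apply (valid_gap_free _ odd_succ_negb), expand_valid, (gap_free_valid _ even_succ_negb), Hx.
  - apply functional_extensionality. intros i. apply fst_expand.
Qed.

Lemma gap_free_contract_seq y : gap_free Nat.odd y -> gap_free Nat.even (contract_seq y).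
Proof.
  intros Hy. set (q := fun j => (y j, gap_label Nat.odd y j)).
  replace (contract_seq y) with (fun i => fst (contract q i)).
  - apply (valid_gap_free _ even_succ_negb), contract_valid, (gap_free_valid _ odd_succ_negb), Hy.
  - apply functional_extensionality. intros i. apply fst_contract.
Qed.

Lemma homeo_expand_seq :
  homeo (@coordLam bool) (@coordLam bool) (XLam (gap_shift Nat.even)) (XLam (gap_shift Nat.odd))
    expand_seq contract_seq.
Proof.
  split; [|split; [|split; [|split; [|split]]]].
  - intros x Hx. apply XLam_gap_free, gap_free_expand_seq, XLam_gap_free, Hx.
  - intros y Hy. apply XLam_gap_free, gap_free_contract_seq, XLam_gap_free, Hy.
  - intros x _. apply functional_extensionality. intros n.
    unfold contract_seq. transitivity (fst (contract (expand (unlabelled x)) n)).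
    + now apply contract_fst.
    + now rewrite contract_expand.
  - intros y Hy. apply XLam_gap_free in Hy.
    set (q := fun j => (y j, gap_label Nat.odd y j)).
    assert (Hq : valid Nat.odd q) by exact (gap_free_valid _ odd_succ_negb y Hy).
    apply functional_extensionality. intros n. unfold expand_seq.
    transitivity (fst (expand (contract q) n)).
    + apply expand_fst. intros i. simpl. symmetry. apply fst_contract.
    + now rewrite expand_contract.
  - apply continuous_symbols, expand_prefix_determined.
  - apply continuous_symbols, contract_prefix_determined.
Qed.

Lemma encode_shiftk g k p : encode g (shiftk k p) = shiftk k (encode g p).
Proof. apply functional_extensionality. intros n. unfold encode. now rewrite !shiftk_app. Qed.

Lemma expand_point_shift x :
  expand_point (shift x) = shiftk (if fst (x 0) then 2 else 1) (expand_point x).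
Proof.
  unfold expand_point. change (decode Nat.even (shift x)) with (shift (decode Nat.even x)).
  rewrite expand_shift. apply encode_shiftk.
Qed.

Lemma contract_point_shift y : XL (gap_shift Nat.odd) y ->
  shiftk (if fst (y 0) then 1 else 0) (contract_point (shift y)) = shift (contract_point y).
Proof.
  intros Hy. pose proof (proj2 (XL_decode _ odd_succ_negb y Hy)) as Hv.
  unfold contract_point. change (decode Nat.odd (shift y)) with (shift (decode Nat.odd y)).
  change (shift (encode Nat.even ?p)) with (shiftk 1 (encode Nat.even p)).
  rewrite <- !encode_shiftk. f_equal. change (shiftk 1 ?p) with (shift p).
  rewrite contract_succ. change (fst (decode Nat.odd y 0)) with (fst (y 0)).
  destruct (fst (y 0)) eqn:E; [|reflexivity].
  change (shiftk 1 ?p) with (shift p). rewrite contract_succ.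
  destruct (valid_odd_one _ 0 Hv E) as [_ [E1 _]].
  change (fst (shift (decode Nat.odd y) 0)) with (fst (decode Nat.odd y 1)). now rewrite E1.
Qed.

Theorem corollary6p9 : coe even_shift odd_shift.
Proof.
  rewrite even_shift_eq, odd_shift_eq.
  exists expand_point, contract_point, expand_seq, contract_seq,
    (fun _ => 0), (fun x : Lpoint bool => if fst (x 0) then 2 else 1),
    (fun y : Lpoint bool => if fst (y 0) then 1 else 0), (fun _ => 1).
  split; [exact homeo_expand_point|].
  split; [exact homeo_expand_seq|].
  split; [exact (continuous_first_symbol _ (fun _ : bool => 0) _)|].
  split; [exact (continuous_first_symbol _ (fun a : bool => if a then 2 else 1) _)|].
  split; [exact (continuous_first_symbol _ (fun a : bool => if a then 1 else 0) _)|].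
  split; [exact (continuous_first_symbol _ (fun _ : bool => 1) _)|].
  split; [intros x _; apply piL_expand_point|].
  split; [intros x _; apply expand_point_shift|].
  intros y Hy. now apply contract_point_shift.
Qed.
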